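(* For the $8$-pleated bowtie $B_8$, the umbral index satisfies $\mathfrak{u}(B_8)=1$; that is, the set of spectral rank 1 vertices of $B_8$ differs from the set of spectral rank 1 vertices of its clique-shadow $\partial^*B_8$.
   Context: For a connected $k$-uniform hypergraph $H=([n],E)$ and $x\in\mathbb{R}^n$, write $x^e=\prod_{v\in e}x_v$ and $F_H(x)=k\sum_{e\in E}x^e$. The principal eigenvector $y$ of $H$ is the unique strictly positive $y$ with $\|y\|_k=1$ and $\rho\, y_i^{k-1}=\sum_{e\ni i} y^{e\setminus\{i\}}$ for all $i$, where $\rho=\max_{\|z\|_k^k=1}F_H(z)$. The clique-shadow $\partial^*H$ is the multigraph on $[n]$ where $\{u,v\}$ has multiplicity $\mu(uv)=|\{e\in E:u,v\in e\}|$; its principal eigenvector is the positive Perron eigenvector of its adjacency matrix (entries $\mu(uv)$), normalized to unit $2$-norm. The spectral ranking of a (hyper)graph orders vertices by decreasing value of its principal eigenvector, tied vertices sharing a rank; spectral rank 1 vertices are those with maximal entry. The umbral index $\mathfrak{u}(H)$ is the least rank index at which the spectral rankings of $H$ and $\partial^*H$ differ (and $0$ if they coincide). The $t$-pleated bowtie $B_t$ is the $3$-uniform hypergraph on vertices $c,\ell_1,\dots,\ell_{t+2},r_1,\dots,r_{t+2}$ with edge set $\{\{c,r_1,r_2\}\}\cup\{\{c,\ell_1,\ell_j\}: 2\le j\le t+2\}\cup\{\{r_1,r_2,r_j\}: 3\le j\le t+2\}$. *)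

From HB Require Import structures.
From mathcomp Require Import all_boot all_order all_algebra.
From mathcomp Require Import reals.
Set Implicit Arguments. Unset Strict Implicit. Unset Printing Implicit Defensive.
Import Order.TTheory GRing.Theory Num.Theory.
Local Open Scope ring_scope.

Definition hF (R : realType) (n k : nat) (E : seq {set 'I_n}) (x : 'I_n -> R) : R :=
  k%:R * \sum_(e <- E) \prod_(v in e) x v.

Definition knorm_pow (R : realType) (n k : nat) (z : 'I_n -> R) : R :=
  \sum_(i < n) `|z i| ^+ k.

Definition hspectral_radius (R : realType) (n k : nat) (E : seq {set 'I_n}) (rho : R) : Prop :=
  (exists z : 'I_n -> R, knorm_pow k z = 1 /\ hF k E z = rho) /\
  (forall z : 'I_n -> R, knorm_pow k z = 1 -> hF k E z <= rho).

Definition hprincipal (R : realType) (n k : nat) (E : seq {set 'I_n}) (y : 'I_n -> R) : Prop :=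
  (forall i, 0 < y i) /\ knorm_pow k y = 1 /\
  exists rho : R, hspectral_radius k E rho /\
    forall i : 'I_n,
      rho * y i ^+ k.-1 = \sum_(e <- E | i \in e) \prod_(v in e :\ i) y v.

Definition shadow_adj (R : realType) (n : nat) (E : seq {set 'I_n}) (u v : 'I_n) : R :=
  if u == v then 0 else (count (fun e : {set 'I_n} => (u \in e) && (v \in e)) E)%:R.

Definition gprincipal (R : realType) (n : nat) (A : 'I_n -> 'I_n -> R) (x : 'I_n -> R) : Prop :=
  (forall i, 0 < x i) /\ \sum_(i < n) x i ^+ 2 = 1 /\
  exists lam : R,
    (forall u, \sum_(w < n) A u w * x w = lam * x u) /\
    (forall (mu : R) (v : 'I_n -> R), (exists i, v i != 0) ->
        (forall u, \sum_(w < n) A u w * v w = mu * v u) -> `|mu| <= lam).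

Definition rank1 (R : realType) (n : nat) (y : 'I_n -> R) : {set 'I_n} :=
  [set i | [forall j, y j <= y i]].

Section Bowtie.
Variable t : nat.
Local Notation N := (2 * t + 4).+1.
Definition bt_c : 'I_N := inord 0.
Definition bt_l (j : nat) : 'I_N := inord j.
Definition bt_r (j : nat) : 'I_N := inord (t + 2 + j).
Definition bowtie_edges : seq {set 'I_N} :=
  [set bt_c; bt_r 1; bt_r 2]
  :: [seq [set bt_c; bt_l 1; bt_l j] | j <- iota 2 t.+1]
  ++ [seq [set bt_r 1; bt_r 2; bt_r j] | j <- iota 3 t].
End Bowtie.

From HB Require Import structures.
From mathcomp Require Import all_boot all_order all_algebra.
From mathcomp Require Import reals.
From mathcomp Require Import ring lra zify.
Import Order.TTheory GRing.Theory Num.Theory.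
Set Implicit Arguments. Unset Strict Implicit.
Local Open Scope ring_scope.

(* Each eigenvector satisfies one polynomial equation per vertex of B_8, and
   the pendant vertices l_2..l_10 (resp. r_3..r_10) of each wing carry equal
   entries, which leaves six unknowns. For the hypergraph, eliminating them shows
   that u = y_c / y_(r_3) is the positive root of (u + 8)^2 (u^2 - 1) = 81 u^2, so
   u^3 <= u + 8, which is exactly y_c <= y_(r_1); the other vertices are then easily
   compared with r_1, so r_1 has spectral rank 1. For the clique-shadow, assuming
   x_(r_1) >= x_c, the right wing bounds the Perron root by l^2 <= 10 l + 16 while
   the left wing forces (l + 7)(l^2 - 9) >= 9 (l + 1)(l + 9); these are
   incompatible, so x_c > x_(r_1). *)

Section Algebra.
Variable R : realFieldType.
Implicit Types a b d p q s u rho : R.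

Lemma bowtie8_ratio_cube_le u : 0 < u ->
  (u + 8) ^+ 2 * u ^+ 2 = (u + 8) ^+ 2 + 81 * u ^+ 2 -> u ^+ 3 <= u + 8.
Proof.
move=> u0 root; rewrite leNgt; apply/negP => lt_u3.
(* The root of u^3 = u + 8 (about 2.1663) exceeds 2166/1000, and beyond that
   point (u + 8)^2 (u^2 - 1) > 81 u^2. *)
have u_ge : 2166 / 1000 <= u.
  rewrite leNgt; apply/negP => u_lt.
  have : 0 <= (2166 / 1000 - u) * (u ^+ 2 + 2166 / 1000 * u + (2166 / 1000) ^+ 2 - 1) by nra.
  nra.
suff : (u + 8) ^+ 2 + 81 * u ^+ 2 < (u + 8) ^+ 2 * u ^+ 2 by rewrite root ltxx.
set e := u - 2166 / 1000.
have e0 : 0 <= e by rewrite /e; lra.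
have -> : u = e + 2166 / 1000 by rewrite /e; ring.
have e2 := exprn_ge0 2 e0; have e3 := exprn_ge0 3 e0; have e4 := exprn_ge0 4 e0.
nra.
Qed.

Lemma gt0_expr_inj (n : nat) p q : (0 < n)%N -> 0 < p -> 0 < q -> p ^+ n = q ^+ n -> p = q.
Proof. by move=> n0 p0 q0; apply: pexpIrn; rewrite // nnegrE ltW. Qed.

Lemma eq_of_scaled_sqr rho c u v : 0 < c -> 0 < u -> 0 < v ->
  rho * u ^+ 2 = c -> rho * v ^+ 2 = c -> u = v.
Proof.
move=> c0 u0 v0 eu ev.
have rho0 : rho != 0 by apply: contraTneq c0 => r0; rewrite -eu r0 mul0r ltxx.
by apply: (gt0_expr_inj (n := 2)) => //; apply: (mulfI rho0); rewrite eu ev.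
Qed.

Lemma hyper_right_wing rho a p q s : 0 < p -> 0 < q -> 0 < s ->
  rho * p ^+ 2 = a * q + 8 * (q * s) -> rho * q ^+ 2 = a * p + 8 * (p * s) ->
  rho * s ^+ 2 = p * q -> q = p /\ rho * p = a + 8 * s.
Proof.
move=> p0 q0 s0 er1 er2 er.
have rho0 : 0 < rho by rewrite -(pmulr_lgt0 _ (exprn_gt0 2 s0)) er mulr_gt0.
have qp : q = p.
  apply: (gt0_expr_inj (n := 3)) => //; apply: (mulfI (lt0r_neq0 rho0)).
  have -> : rho * p ^+ 3 = (rho * p ^+ 2) * p by ring.
  have -> : rho * q ^+ 3 = (rho * q ^+ 2) * q by ring.
  by rewrite er1 er2; ring.
split=> //; apply: (mulIf (lt0r_neq0 p0)); rewrite -mulrA -expr2 er1 qp; ring.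
Qed.

Lemma hyper_left_wing rho a b d : 0 < a -> 0 < b -> 0 < d ->
  rho * b ^+ 2 = 9 * (a * d) -> rho * d ^+ 2 = a * b ->
  rho ^+ 2 * (b * d) = 9 * a ^+ 2 /\ b ^+ 3 = 9 * d ^+ 3.
Proof.
move=> a0 b0 d0 el1 el; split.
  apply: (mulIf (lt0r_neq0 (mulr_gt0 b0 d0))).
  have -> : rho ^+ 2 * (b * d) * (b * d) = (rho * b ^+ 2) * (rho * d ^+ 2) by ring.
  by rewrite el1 el; ring.
have rho0 : rho != 0 by apply/eqP => r0; rewrite r0 mul0r in el1; have := mulr_gt0 a0 d0; lra.
apply: (mulfI rho0); have -> : rho * b ^+ 3 = (rho * b ^+ 2) * b by ring.
have -> : rho * (9 * d ^+ 3) = 9 * ((rho * d ^+ 2) * d) by ring.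
by rewrite el1 el; ring.
Qed.

Lemma hyper_left_wing_le rho a b d : 0 < rho -> 0 < a -> 0 < b -> 0 < d -> 81 < rho ^+ 3 ->
  rho ^+ 2 * (b * d) = 9 * a ^+ 2 -> b ^+ 3 = 9 * d ^+ 3 -> d <= b /\ b <= a.
Proof.
move=> rho0 a0 b0 d0 rho81 bd_eq b3.
have rb : rho ^+ 3 * b ^+ 3 = 81 * a ^+ 3.
  apply: (gt0_expr_inj (n := 2)); rewrite ?mulr_gt0 ?exprn_gt0 //.
  have -> : (81 * a ^+ 3) ^+ 2 = 9 * (9 * a ^+ 2) ^+ 3 by ring.
  rewrite -bd_eq; have -> : 9 * (rho ^+ 2 * (b * d)) ^+ 3 = rho ^+ 6 * b ^+ 3 * (9 * d ^+ 3) by ring.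
  by rewrite -b3; ring.
have d3b3 : d ^+ 3 <= b ^+ 3 by rewrite b3; have := exprn_gt0 3 d0; lra.
have b3a3 : b ^+ 3 <= a ^+ 3.
  have : 81 * b ^+ 3 < rho ^+ 3 * b ^+ 3 by rewrite ltr_pM2r // exprn_gt0.
  by rewrite rb; lra.
by split; [move: d3b3 | move: b3a3]; rewrite ler_pXn2r // nnegrE ltW.
Qed.

Lemma hyper_center_sqr_le rho a s : 0 < a -> 0 < s -> 0 < rho ->
  rho ^+ 3 * s ^+ 2 = (a + 8 * s) ^+ 2 ->
  rho ^+ 3 * a ^+ 2 = (a + 8 * s) ^+ 2 + 81 * a ^+ 2 -> a ^+ 2 <= rho * s ^+ 2.
Proof.
move=> a0 s0 rho0 crs cra; set u := a / s.
have u0 : 0 < u by rewrite divr_gt0.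
have au : a = u * s by rewrite divfK // lt0r_neq0.
have s2 : s ^+ 2 != 0 by rewrite expf_neq0 // lt0r_neq0.
have rho3 : rho ^+ 3 = (u + 8) ^+ 2.
  by apply: (mulIf s2); rewrite crs au; ring.
have root : (u + 8) ^+ 2 * u ^+ 2 = (u + 8) ^+ 2 + 81 * u ^+ 2.
  apply: (mulIf s2); transitivity (rho ^+ 3 * a ^+ 2); first by rewrite rho3 au; ring.
  by rewrite cra au; ring.
have u6 : (u ^+ 2) ^+ 3 <= rho ^+ 3.
  rewrite rho3 -exprM mulnC exprM; apply: lerXn2r; rewrite ?nnegrE.
  - by rewrite exprn_ge0 // ltW.
  - by rewrite addr_ge0 // ltW.
  - exact: bowtie8_ratio_cube_le.
have u2 : u ^+ 2 <= rho by move: u6; rewrite ler_pXn2r // nnegrE ?exprn_ge0 // ltW.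
by rewrite au exprMn ler_pM2r // exprn_gt0.
Qed.

Lemma hyper_bowtie8_alg rho a b d p q s :
  0 < a -> 0 < b -> 0 < d -> 0 < p -> 0 < q -> 0 < s ->
  rho * a ^+ 2 = p * q + 9 * (b * d) ->
  rho * b ^+ 2 = 9 * (a * d) ->
  rho * d ^+ 2 = a * b ->
  rho * p ^+ 2 = a * q + 8 * (q * s) ->
  rho * q ^+ 2 = a * p + 8 * (p * s) ->
  rho * s ^+ 2 = p * q ->
  [/\ a <= p, b <= p, d <= p, q = p & s <= p].
Proof.
move=> a0 b0 d0 p0 q0 s0 ec el1 el er1 er2 er.
have [qp rp] := hyper_right_wing p0 q0 s0 er1 er2 er; subst q.
have [bd_eq b3] := hyper_left_wing a0 b0 d0 el1 el.
have rho0 : 0 < rho by rewrite -(pmulr_lgt0 _ (exprn_gt0 2 s0)) er mulr_gt0.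
have crs : rho ^+ 3 * s ^+ 2 = (a + 8 * s) ^+ 2.
  have -> : rho ^+ 3 * s ^+ 2 = rho ^+ 2 * (rho * s ^+ 2) by ring.
  by rewrite er -rp; ring.
have cra : rho ^+ 3 * a ^+ 2 = (a + 8 * s) ^+ 2 + 81 * a ^+ 2.
  have -> : rho ^+ 3 * a ^+ 2 = rho ^+ 2 * (rho * a ^+ 2) by ring.
  by rewrite ec mulrDr [rho ^+ 2 * (9 * _)]mulrCA bd_eq -rp; ring.
have rho81 : 81 < rho ^+ 3.
  rewrite -(ltr_pM2r (exprn_gt0 2 a0)) cra.
  by have := exprn_gt0 2 (addr_gt0 a0 (mulr_gt0 (ltr0n _ 8) s0)); lra.
have [db ba] := hyper_left_wing_le rho0 a0 b0 d0 rho81 bd_eq b3.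
have ap : a <= p.
  by have := hyper_center_sqr_le a0 s0 rho0 crs cra; rewrite er -expr2 ler_pXn2r // nnegrE ltW.
have sp : s <= p.
  have rho1 : 1 < rho by rewrite -(expr_gt1 (isT : (0 < 3)%N)) ?(ltW rho0) //; lra.
  have : s ^+ 2 <= p ^+ 2 by rewrite [p ^+ 2]expr2 -er ler_peMl ?exprn_ge0 ?ltW.
  by rewrite ler_pXn2r // nnegrE ltW.
have bp := le_trans ba ap.
by split=> //; apply: le_trans db bp.
Qed.

Lemma shadow_bowtie8_alg (lam X L M P Q S : R) :
  0 < X -> 0 < L -> 0 < M -> 0 < P ->
  lam * X = P + Q + 9 * L + M ->
  lam * L = 9 * X + M ->
  lam * M = 9 * X + 9 * L ->
  lam * P = X + 9 * Q + S ->
  lam * Q = X + 9 * P + S ->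
  lam * S = 8 * P + 8 * Q ->
  P < X.
Proof.
move=> X0 L0 M0 P0 ec el1 el er1 er2 er.
have lam0 : 0 < lam by rewrite -(pmulr_lgt0 _ L0) el1; lra.
have PQ : P = Q.
  have : (lam + 9) * (P - Q) = 0 by rewrite mulrBr !mulrDl er1 er2; ring.
  by move/eqP; rewrite mulf_eq0 subr_eq0 => /orP[|/eqP //]; lra.
subst Q; rewrite ltNge; apply/negP => XP.
have right_root : lam ^+ 2 <= 10 * lam + 16.
  rewrite -(ler_pM2r P0).
  have -> : lam ^+ 2 * P = lam * (lam * P) by ring.
  rewrite er1 !mulrDr er; have : lam * X <= lam * P by rewrite ler_pM2l.
  nra.
have left_le : (lam + 9) * L <= (lam + 7) * X.
  have M_eq : M = lam * L - 9 * X by rewrite el1; ring.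
  rewrite !mulrDl; lra.
have left_eq : (lam ^+ 2 - 9) * L = 9 * (lam + 1) * X.
  have -> : (lam ^+ 2 - 9) * L = lam * (lam * L) - 9 * L by ring.
  by rewrite el1 mulrDr el; ring.
have lam9 : 0 < lam ^+ 2 - 9.
  by rewrite -(pmulr_lgt0 _ L0) left_eq !mulr_gt0 // addr_gt0.
have key : 9 * (lam + 1) * (lam + 9) <= (lam + 7) * (lam ^+ 2 - 9).
  rewrite -(ler_pM2r X0).
  have -> : 9 * (lam + 1) * (lam + 9) * X = (lam + 9) * ((lam ^+ 2 - 9) * L).
    by rewrite left_eq; ring.
  have -> : (lam + 7) * (lam ^+ 2 - 9) * X = (lam ^+ 2 - 9) * ((lam + 7) * X) by ring.
  by rewrite mulrCA ler_pM2l.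
nra.
Qed.

End Algebra.

Section TripleHypergraph.
Variable n : nat.
Local Notation V := 'I_n.+1.

Definition triple_edge (t : nat * nat * nat) : {set V} :=
  [set inord t.1.1; inord t.1.2; inord t.2].

Definition proper_triple (t : nat * nat * nat) : bool :=
  [&& t.1.1 <= n, t.1.2 <= n, t.2 <= n,
      t.1.1 != t.1.2, t.1.1 != t.2 & t.1.2 != t.2]%N.

Variable R : nmodType.

Definition triple_link (op : R -> R -> R) (F : V -> R) (i : nat)
    (t : nat * nat * nat) : R :=
  let: (a, b, c) := t in
  if i == a then op (F (inord b)) (F (inord c))
  else if i == b then op (F (inord a)) (F (inord c))
  else if i == c then op (F (inord a)) (F (inord b)) else 0.

Lemma inord_eq (i j : nat) : (i <= n)%N -> (j <= n)%N ->
  ((inord i : V) == inord j) = (i == j).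
Proof. by move=> hi hj; rewrite -val_eqE /= !inordK. Qed.

Lemma big_set2 (idx : R) (op : Monoid.com_law idx) (F : V -> R) (b c : V) :
  b != c -> \big[op/idx]_(v in [set b; c]) F v = op (F b) (F c).
Proof. by move=> bc; rewrite big_setU1 ?big_set1 // inE. Qed.

Lemma big_triple_edgeD1 (idx : R) (op : Monoid.com_law idx) (F : V -> R)
    (t : nat * nat * nat) (i : nat) :
  proper_triple t -> (i <= n)%N ->
  (if inord i \in triple_edge t then \big[op/idx]_(v in triple_edge t :\ inord i) F v
   else 0) = triple_link op F i t.
Proof.
case: t => [[a b] c] /and5P[ha hb hc ab /andP[ac bc]] hi.
have [nab nac nbc] : [/\ (inord a : V) != inord b, (inord a : V) != inord c
                      & (inord b : V) != inord c] by rewrite !inord_eq.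
have nba := nab; have nca := nac; have ncb := nbc.
rewrite eq_sym in nba; rewrite eq_sym in nca; rewrite eq_sym in ncb.
rewrite /triple_edge /= !inE !inord_eq //.
case: (eqVneq i a) => [->|_] /=; last case: (eqVneq i b) => [->|_] /=;
  last case: (eqVneq i c) => [->|_] //=;
  rewrite -big_set2 //; apply: eq_bigl => v; rewrite !inE;
  case: (eqVneq v (inord _)) => [->|vi]; rewrite ?(negPf vi) ?orbF //= ?eqxx //=;
  by rewrite ?(negPf nab) ?(negPf nba) ?(negPf nac) ?(negPf nca) ?(negPf nbc) ?(negPf ncb).
Qed.

Lemma big_link_triples (idx : R) (op : Monoid.com_law idx) (F : V -> R)
    (T : seq (nat * nat * nat)) (i : nat) :
  all proper_triple T -> (i <= n)%N ->
  \sum_(e <- map triple_edge T | inord i \in e) \big[op/idx]_(v in e :\ inord i) F v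
  = \sum_(t <- T) triple_link op F i t.
Proof.
move=> /allP Tok hi; rewrite big_map big_mkcond.
by apply: eq_big_seq => t /Tok tok; rewrite big_triple_edgeD1.
Qed.

End TripleHypergraph.

Lemma shadow_adj_sumE (R : realType) (n : nat) (E : seq {set 'I_n}) (x : 'I_n -> R)
    (u : 'I_n) :
  \sum_w shadow_adj R E u w * x w = \sum_(e <- E | u \in e) \sum_(w in e :\ u) x w.
Proof.
elim: E => [|e E IH].
  by rewrite big_nil big1 // => w _; rewrite /shadow_adj; case: (u == w); rewrite mul0r.
rewrite big_cons -IH.
have -> : \sum_w shadow_adj R (e :: E) u w * x w =
    \sum_w (if u == w then 0 else ((u \in e) && (w \in e))%:R) * x w
  + \sum_w shadow_adj R E u w * x w.
  rewrite -big_split; apply: eq_bigr => w _; rewrite /shadow_adj /=.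
  by case: (u == w); rewrite ?mul0r ?addr0 // natrD mulrDl.
case: (boolP (u \in e)) => ue; last first.
  by rewrite big1 ?add0r // => w _; case: (u == w); rewrite ?(negPf ue) mul0r.
rewrite (big_mkcond (fun w => w \in e :\ u)); congr (_ + _); apply: eq_bigr => w _.
rewrite in_setD1; case: (eqVneq w u) => [->|_]; first by rewrite mul0r.
by case: (w \in e); rewrite ?mul1r ?mul0r.
Qed.

Local Notation V := 'I_(2 * 8 + 4).+1.

(* Vertex numbering of [bowtie_edges 8]: c = 0, l_j = j and r_j = 10 + j. *)
Definition bowtie8_triples : seq (nat * nat * nat) :=
  (0, 11, 12)%N :: [seq (0, 1, j)%N | j <- iota 2 9] ++ [seq (11, 12, j)%N | j <- iota 13 8].

Lemma bowtie8_edgesE : bowtie_edges 8 = map (@triple_edge 20) bowtie8_triples.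
Proof. by []. Qed.

Lemma bowtie8_triples_proper : all (@proper_triple 20) bowtie8_triples.
Proof. by []. Qed.

Section BowtieLinks.
Variables (R : nmodType) (op : R -> R -> R) (F : V -> R).

Definition bowtie8_link (k : nat) : R := \sum_(t <- bowtie8_triples) triple_link op F k t.

Lemma bowtie8_link_c : bowtie8_link 0 =
  op (F (inord 11)) (F (inord 12)) + \sum_(2 <= j < 11) op (F (inord 1)) (F (inord j)).
Proof. by rewrite /bowtie8_link unlock /= ?addr0 ?add0r. Qed.

Lemma bowtie8_link_l1 : bowtie8_link 1 = \sum_(2 <= j < 11) op (F (inord 0)) (F (inord j)).
Proof. by rewrite /bowtie8_link unlock /= ?addr0 ?add0r. Qed.

Lemma bowtie8_link_l (k : nat) : (2 <= k < 11)%N ->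
  bowtie8_link k = op (F (inord 0)) (F (inord 1)).
Proof.
by move=> /andP[]; do 11?(case: k => [|k] //); rewrite /bowtie8_link unlock /= ?addr0 ?add0r.
Qed.

Lemma bowtie8_link_r1 : bowtie8_link 11 =
  op (F (inord 0)) (F (inord 12)) + \sum_(13 <= j < 21) op (F (inord 12)) (F (inord j)).
Proof. by rewrite /bowtie8_link unlock /= ?addr0 ?add0r. Qed.

Lemma bowtie8_link_r2 : bowtie8_link 12 =
  op (F (inord 0)) (F (inord 11)) + \sum_(13 <= j < 21) op (F (inord 11)) (F (inord j)).
Proof. by rewrite /bowtie8_link unlock /= ?addr0 ?add0r. Qed.

Lemma bowtie8_link_r (k : nat) : (13 <= k < 21)%N ->
  bowtie8_link k = op (F (inord 11)) (F (inord 12)).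
Proof.
by move=> /andP[]; do 21?(case: k => [|k] //); rewrite /bowtie8_link unlock /= ?addr0 ?add0r.
Qed.

End BowtieLinks.

Section Bowtie8Eigen.
Variable R : realType.

Lemma hyper_bowtie8_link (y : V -> R) rho :
  (forall i : V, rho * y i ^+ 3.-1 =
     \sum_(e <- bowtie_edges 8 | i \in e) \prod_(v in e :\ i) y v) ->
  forall k, (k <= 20)%N -> rho * y (inord k) ^+ 2 = bowtie8_link *%R y k.
Proof. by move=> Hy k hk; rewrite Hy bowtie8_edgesE big_link_triples ?bowtie8_triples_proper. Qed.

Lemma shadow_bowtie8_link (x : V -> R) lam :
  (forall u : V, \sum_(w < (2 * 8 + 4).+1) shadow_adj R (bowtie_edges 8) u w * x w = lam * x u) ->
  forall k, (k <= 20)%N -> lam * x (inord k) = bowtie8_link +%R x k.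
Proof.
by move=> Hx k hk; rewrite -Hx shadow_adj_sumE bowtie8_edgesE big_link_triples ?bowtie8_triples_proper.
Qed.

Lemma sumr_const_nat_in (F : nat -> R) (m n : nat) (c : R) :
  (forall j, (m <= j < n)%N -> F j = c) -> \sum_(m <= j < n) F j = (n - m)%:R * c.
Proof. by move=> Fc; rewrite (eq_big_nat _ _ Fc) sumr_const_nat mulr_natl. Qed.

Lemma hyper_bowtie8_rank1 (y : V -> R) :
  hprincipal 3 (bowtie_edges 8) y -> bt_r 8 1 \in rank1 y.
Proof.
move=> [ypos [_ [rho [_ /hyper_bowtie8_link Hy]]]].
have yl k : (2 <= k < 11)%N -> y (inord k) = y (inord 2).
  move=> hk; apply: (@eq_of_scaled_sqr _ rho (y (inord 0) * y (inord 1)));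
    by rewrite ?mulr_gt0 ?Hy ?bowtie8_link_l //; lia.
have yr k : (13 <= k < 21)%N -> y (inord k) = y (inord 13).
  move=> hk; apply: (@eq_of_scaled_sqr _ rho (y (inord 11) * y (inord 12)));
    by rewrite ?mulr_gt0 ?Hy ?bowtie8_link_r //; lia.
have ec : rho * y (inord 0) ^+ 2 =
    y (inord 11) * y (inord 12) + 9 * (y (inord 1) * y (inord 2)).
  by rewrite Hy // bowtie8_link_c (sumr_const_nat_in (c := y (inord 1) * y (inord 2))) // => j /yl ->.
have el1 : rho * y (inord 1) ^+ 2 = 9 * (y (inord 0) * y (inord 2)).
  by rewrite Hy // bowtie8_link_l1 (sumr_const_nat_in (c := y (inord 0) * y (inord 2))) // => j /yl ->.
have er1 : rho * y (inord 11) ^+ 2 =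
    y (inord 0) * y (inord 12) + 8 * (y (inord 12) * y (inord 13)).
  by rewrite Hy // bowtie8_link_r1 (sumr_const_nat_in (c := y (inord 12) * y (inord 13))) // => j /yr ->.
have er2 : rho * y (inord 12) ^+ 2 =
    y (inord 0) * y (inord 11) + 8 * (y (inord 11) * y (inord 13)).
  by rewrite Hy // bowtie8_link_r2 (sumr_const_nat_in (c := y (inord 11) * y (inord 13))) // => j /yr ->.
have el : rho * y (inord 2) ^+ 2 = y (inord 0) * y (inord 1) by rewrite Hy ?bowtie8_link_l.
have er : rho * y (inord 13) ^+ 2 = y (inord 11) * y (inord 12) by rewrite Hy ?bowtie8_link_r.
have [ap bp dp qp sp] := hyper_bowtie8_alg (ypos _) (ypos _) (ypos _) (ypos _) (ypos _) (ypos _)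
  ec el1 el er1 er2 er.
rewrite inE; apply/forallP => j; rewrite -(inord_val j).
have : (j < 21)%N := ltn_ord j; move: (nat_of_ord j) => k hk.
case: (ltnP k 2) => [|k2]; first by case: k {hk} => [|[|//]] _; [exact: ap | exact: bp].
case: (ltnP k 11) => [k11|k11]; first by rewrite yl ?k2.
case: (ltnP k 13) => [k13|k13]; last by rewrite yr ?k13.
have [-> //|k_ne11] := eqVneq k 11.
by rewrite (_ : k = 12%N) ?qp //; lia.
Qed.

Lemma shadow_bowtie8_r1_lt_c (x : V -> R) :
  gprincipal (shadow_adj R (bowtie_edges 8)) x -> x (bt_r 8 1) < x (bt_c 8).
Proof.
move=> [xpos [_ [lam [/shadow_bowtie8_link Hx _]]]]; change (x (inord 11) < x (inord 0)).
set M := \sum_(2 <= j < 11) x (inord j); set S := \sum_(13 <= j < 21) x (inord j).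
have M0 : 0 < M by rewrite /M big_ltn // ltr_pwDl // sumr_ge0 // => j _; exact: ltW.
have xl k : (2 <= k < 11)%N -> lam * x (inord k) = x (inord 0) + x (inord 1).
  by move=> hk; rewrite Hx ?bowtie8_link_l //; lia.
have xr k : (13 <= k < 21)%N -> lam * x (inord k) = x (inord 11) + x (inord 12).
  by move=> hk; rewrite Hx ?bowtie8_link_r //; lia.
apply: (@shadow_bowtie8_alg _ lam _ (x (inord 1)) M _ (x (inord 12)) S);
  rewrite ?Hx // /M /S ?mulr_sumr.
- by rewrite bowtie8_link_c big_split /= sumr_const_nat -[(11 - 2)%N]/9%N; ring.
- by rewrite bowtie8_link_l1 big_split /= sumr_const_nat -[(11 - 2)%N]/9%N; ring.
- by rewrite (sumr_const_nat_in xl) -[(11 - 2)%N]/9%N; ring.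
- by rewrite bowtie8_link_r1 big_split /= sumr_const_nat -[(21 - 13)%N]/8%N; ring.
- by rewrite bowtie8_link_r2 big_split /= sumr_const_nat -[(21 - 13)%N]/8%N; ring.
- by rewrite (sumr_const_nat_in xr) -[(21 - 13)%N]/8%N; ring.
Qed.

End Bowtie8Eigen.

Theorem theorem4p3 (R : realType) (y x : 'I_(2 * 8 + 4).+1 -> R) :
  hprincipal 3 (bowtie_edges 8) y ->
  gprincipal (shadow_adj R (bowtie_edges 8)) x ->
  rank1 y != rank1 x.
Proof.
move=> /hyper_bowtie8_rank1 r1_y /shadow_bowtie8_r1_lt_c lt_x.
apply/eqP => rank1_eq; move: r1_y; rewrite rank1_eq inE => /forallP/(_ (bt_c 8)).
by rewrite leNgt lt_x.
Qed.
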